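(* Let $a\in[-1,1)$ and $\psi_a=\mathds{1}_{[a,1]}$ on $[-1,1]$. Write $P_{\mathcal{A}_+}(\psi_a)=\sum_{n=0}^\infty c_nt^n$ with $c_n\ge0$, and let $S(a)=\{n\in\mathbb{N}:c_n>0\}$. Then $S(a)=\{0,1\}$ if and only if $-\frac1{\sqrt5}\le a\le0$. Moreover, for every $a\in[-1/\sqrt5,0]$, \[ P_{\mathcal{A}_+}(\psi_a)=\frac12(1-a)+\frac34(1-a^2)t. \]
   Context: $\mathbb{N}=\{0,1,2,\dots\}$. $\psi_a(t)=0$ for $t\in[-1,a)$ and $\psi_a(t)=1$ for $t\in[a,1]$. $\mathcal{A}_+=\{\sum_{n=0}^\infty a_nt^n : a_n\ge0,\ \text{the series converges in }L^2([-1,1])\}$ (real $L^2$ for Lebesgue measure, convergence of partial sums); it is a closed convex cone, $P_{\mathcal{A}_+}$ denotes the metric projection onto it (the unique nearest point), and every element of $\mathcal{A}_+$ has a unique representation $\sum_n c_nt^n$ with $c_n\ge0$. *)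

From HB Require Import structures.
From mathcomp Require Import all_boot all_order all_algebra.
From mathcomp Require Import all_classical all_reals all_analysis.
Set Implicit Arguments. Unset Strict Implicit. Unset Printing Implicit Defensive.
Import Order.TTheory GRing.Theory Num.Theory.
Import numFieldNormedType.Exports.
Local Open Scope classical_set_scope.
Local Open Scope ring_scope.

Section Defs.
Variable R : realType.

Definition I11 : set R := `[(-1)%R, 1%R].

Definition psi (a : R) (t : R) : R := if a <= t then 1 else 0.

Definition psum (c : nat -> R) (N : nat) (t : R) : R :=
  \sum_(0 <= n < N) c n * t ^+ n.

Definition L2dist2 (f g : R -> R) : \bar R :=
  (\int[@lebesgue_measure R]_(x in I11) ((f x - g x) ^+ 2)%:E)%E.

Definition series_L2_cvg (c : nat -> R) (g : R -> R) : Prop :=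
  measurable_fun I11 g /\
  (fun N : nat => L2dist2 g (psum c N)) @ \oo --> 0%E.

(* c is the coefficient sequence of an element of the cone A_+,
   the element being the L^2-class of g *)
Definition in_Aplus (c : nat -> R) (g : R -> R) : Prop :=
  (forall n, 0 <= c n) /\ series_L2_cvg c g.

Definition is_proj_Aplus (f : R -> R) (c : nat -> R) : Prop :=
  exists g, in_Aplus c g /\
    forall c' g', in_Aplus c' g' -> (L2dist2 f g <= L2dist2 f g')%E.

End Defs.

(* The projection [g = sum_n c_n t^n] of [psi_a] onto [A_+] is characterised by variational
   conditions on the residual [r = psi_a - g]: perturbing [c_n] by [+-e] shows [<r, t^n> <= 0]
   for every [n], with equality when [c_n > 0].

   If the support is [{0, 1}], the equalities at [n = 0, 1] give [c_0 = (1 - a)/2] and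
   [c_1 = 3/4 (1 - a^2)], and the inequalities at [n = 2, 3] then read [a <= a^3] and
   [(1 - a^4)/4 <= 3/10 (1 - a^2)], that is [a <= 0] and [5 a^2 <= 1].

   Conversely, for such [a] the candidate [p = (1 - a)/2 + 3/4 (1 - a^2) t] satisfies
   [<psi_a - p, t^n> <= 0] for all [n] (even and odd [n] separately) and [<psi_a - p, p> = 0].
   Since [g - p = (psi_a - p) - r], expanding [|g - p|^2 = <(psi_a - p) - r, g - p>] gives a
   sum of nonpositive terms, so [g = p] in [L^2].  Pairing with the indicator of [[0, e)]
   yields [sum_n c_n e^(n+1)/(n+1) = (1 - a)/2 e + 3/4 (1 - a^2) e^2/2] on [[0, 1]], and as
   the [c_n] are nonnegative this forces [c_0], [c_1] as claimed and [c_n = 0] for [n >= 2]. *)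

From HB Require Import structures.
From mathcomp Require Import all_boot all_order all_algebra.
From mathcomp Require Import all_classical all_reals all_analysis.
From mathcomp Require Import measurable_realfun.
From mathcomp Require Import ring lra.
Import Order.TTheory GRing.Theory Num.Theory.
Import numFieldNormedType.Exports.

Set Implicit Arguments.
Unset Strict Implicit.
Unset Printing Implicit Defensive.

Local Open Scope classical_set_scope.
Local Open Scope ring_scope.

Lemma ler0_small_scale (R : realFieldType) (x K d : R) : 0 < d ->
  (forall e, 0 < e -> e <= d -> x <= e * K) -> x <= 0.
Proof.
move=> d0 small; rewrite leNgt; apply/negP => x0.
have K1 : 0 < `|K| + 1 by rewrite ltr_wpDl.
pose e := Num.min d (x / (`|K| + 1)).
have e0 : 0 < e by rewrite lt_min d0 divr_gt0.
have ed : e <= d by rewrite ge_min lexx.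
have ex : e * (`|K| + 1) <= x by rewrite -ler_pdivlMr // ge_min lexx orbT.
have := small e e0 ed; have := ler_norm K; have := normr_ge0 K; nra.
Qed.

Lemma sqrt5_range (R : rcfType) (a : R) :
  (- (Num.sqrt 5)^-1 <= a <= 0) = (a <= 0) && (5 * a ^+ 2 <= 1).
Proof.
have [a_le0|a_gt0] := leP a 0; rewrite ?andbF ?andbT //.
rewrite lerNl -(ler0_norm a_le0) -sqrtr_sqr -sqrtrV ?ler0n // ler_sqrt ?invr_ge0 ?ler0n //.
by apply/idP/idP => h; lra.
Qed.

(* The conditions [<r, t^2> <= 0] and [<r, t^3> <= 0] for the residual
   [r = psi_a - ((1 - a)/2 + 3/4 (1 - a^2) t)]. *)
Lemma moment_bounds (R : realFieldType) (a : R) : 0 < 1 - a ^+ 2 ->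
  a <= a ^+ 3 -> (1 - a ^+ 4) / 4 <= 3 / 10 * (1 - a ^+ 2) ->
  a <= 0 /\ 5 * a ^+ 2 <= 1.
Proof.
move=> a2 a3 a4; split.
  rewrite leNgt; apply/negP => a0.
  have := mulr_gt0 a0 a2; rewrite mulrBr mulr1 -exprS; lra.
have a4E : a ^+ 4 = a ^+ 2 * a ^+ 2 by rewrite -exprD.
rewrite a4E in a4; set x := a ^+ 2 in a2 a4 *.
have : 0 <= (1 - x) * (1 - 5 * x) by lra.
by rewrite pmulr_rge0 //; lra.
Qed.

Lemma one_sub_expS_le (R : realFieldType) (x : R) m : 0 <= x <= 1 / 5 ->
  1 - x ^+ m.+1 <= 5 / 4 * (1 - x).
Proof.
move=> /andP[x0 x5]; elim: m => [|m ih]; first by rewrite expr1; lra.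
have -> : 1 - x ^+ m.+2 = (1 - x) + x * (1 - x ^+ m.+1) by rewrite [x ^+ m.+2]exprS; ring.
nra.
Qed.

Lemma even_moment_gap (R : realFieldType) (a : R) m : -1 <= a <= 0 ->
  (1 - a ^+ (m.*2).+1) / (m.*2).+1%:R <= (1 - a) / 2 * (2 / (m.*2).+1%:R).
Proof.
move=> /andP[a1 a0].
rewrite mulrA divfK ?pnatr_eq0 //.
rewrite ler_wpM2r ?invr_ge0 ?ler0n // lerD2l lerN2 exprS -mul2n exprM.
have : (a ^+ 2) ^+ m <= 1 by rewrite exprn_ile1 ?sqr_ge0 //; nra.
have := exprn_ge0 m (sqr_ge0 a); nra.
Qed.

Lemma odd_moment_gap (R : realFieldType) (a : R) m : 5 * a ^+ 2 <= 1 ->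
  (1 - a ^+ (m.*2).+2) / (m.*2).+2%:R <= 3 / 4 * (1 - a ^+ 2) * (2 / (m.*2).+3%:R).
Proof.
move=> a5; have x0 := sqr_ge0 a; set x := a ^+ 2 in x0 a5 *.
have -> : a ^+ (m.*2).+2 = x ^+ m.+1 by rewrite -exprM mul2n doubleS.
have -> : (m.*2).+2%:R = 2 * (m%:R + 1) :> R by rewrite -addn2 natrD -mul2n natrM; ring.
have -> : (m.*2).+3%:R = 2 * m%:R + 3 :> R by rewrite -addn3 natrD -mul2n natrM; ring.
have m0 : 0 <= m%:R :> R by exact: ler0n.
rewrite ler_pdivrMr; last by apply: mulr_gt0; lra.
have -> : 3 / 4 * (1 - x) * (2 / (2 * m%:R + 3)) * (2 * (m%:R + 1)) =
          3 * (m%:R + 1) * (1 - x) / (2 * m%:R + 3) by field; apply: lt0r_neq0; lra.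
rewrite ler_pdivlMr; last lra.
have x5 : 0 <= x <= 1 / 5 by apply/andP; split; lra.
case: m m0 => [|[|m]] m0.
- by rewrite expr1; lra.
- by rewrite expr2; nra.
have := one_sub_expS_le m.+2 x5.
have -> : m.+2%:R = m%:R + 2 :> R by rewrite -addn2 natrD.
have : 0 <= m%:R :> R by exact: ler0n.
nra.
Qed.

Definition primitive_psum (R : realType) (c : nat -> R) (e : R) (k N : nat) :=
  \sum_(k <= n < N) c n * (e ^+ n.+1 / n.+1%:R).

Section coefficients_of_primitive.
Variables (R : realType) (c : nat -> R) (A B : R).
Hypothesis c_ge0 : forall n, 0 <= c n.

Lemma primitive_psum_ge0 e k N : 0 <= e -> 0 <= primitive_psum c e k N.
Proof.
move=> e0; apply: sumr_ge0 => n _; apply: mulr_ge0 => //.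
by apply: divr_ge0; [exact: exprn_ge0|exact: ler0n].
Qed.

Lemma primitive_psum_split e N : (2 <= N)%N ->
  primitive_psum c e 0 N = c 0%N * e + c 1%N * (e ^+ 2 / 2) + primitive_psum c e 2 N.
Proof.
by move=> N2; rewrite /primitive_psum big_ltn ?(leq_trans _ N2) // big_ltn // expr1 divr1 addrA.
Qed.

Lemma primitive_psum_le_cube e N : 0 <= e <= 1 ->
  primitive_psum c e 2 N <= e ^+ 3 * primitive_psum c 1 2 N.
Proof.
move=> /andP[e0 e1]; rewrite /primitive_psum big_distrr /=.
apply: ler_sum_nat => n /andP[n2 _]; rewrite expr1n mulrCA mul1r ler_wpM2r //.
  by apply: divr_ge0; [exact: c_ge0|exact: ler0n].
exact: ler_wiXn2l.
Qed.

Hypothesis primitive_cvg : forall e, 0 <= e <= 1 ->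
  primitive_psum c e 0 N @[N --> \oo] --> A * e + B * (e ^+ 2 / 2).

Lemma primitive_lim_ge e : 0 <= e <= 1 ->
  c 0%N * e + c 1%N * (e ^+ 2 / 2) <= A * e + B * (e ^+ 2 / 2).
Proof.
move=> e01; apply: (cvgr_to_ge (primitive_cvg e01)); near=> N.
have N2 : (2 <= N)%N by near: N; exists 2%N.
rewrite primitive_psum_split // lerDl primitive_psum_ge0 //.
by case/andP: e01.
Unshelve. all: by end_near.
Qed.

Lemma primitive_coef01 : c 0%N = A /\ c 1%N = B.
Proof.
have e1 : 0 <= (1 : R) <= 1 by apply/andP; split; lra.
(* the tail from [n = 2] on is [O(e^3)]: the lower bound at [e = 1/4, 1] and the upper
   bound at [e = 1/2] pin down [c 0] and [c 1] *)
have upper e : 0 <= e <= 1 ->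
    A * e + B * (e ^+ 2 / 2) - e ^+ 3 * (A * 1 + B * (1 ^+ 2 / 2)) <=
    c 0%N * e + c 1%N * (e ^+ 2 / 2) - e ^+ 3 * (c 0%N * 1 + c 1%N * (1 ^+ 2 / 2)).
  move=> e01; apply: (cvgr_to_le (cvgB (primitive_cvg e01) (cvgM (cvg_cst _) (primitive_cvg e1)))).
  near=> N; have N2 : (2 <= N)%N by near: N; exists 2%N.
  change (primitive_psum c e 0 N - e ^+ 3 * primitive_psum c 1 0 N <=
          c 0%N * e + c 1%N * (e ^+ 2 / 2) - e ^+ 3 * (c 0%N * 1 + c 1%N * (1 ^+ 2 / 2))).
  rewrite !primitive_psum_split // !expr1n; have := primitive_psum_le_cube N e01; lra.
have q1 : 0 <= (1 / 4 : R) <= 1 by apply/andP; split; lra.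
have h1 : 0 <= (1 / 2 : R) <= 1 by apply/andP; split; lra.
have := primitive_lim_ge q1; have := primitive_lim_ge e1; have := upper _ h1.
rewrite !expr1n; move=> *; split; lra.
Unshelve. all: by end_near.
Qed.

Lemma primitive_coef_ge2 n : (2 <= n)%N -> c n = 0.
Proof.
move=> n2; have [c0 c1] := primitive_coef01.
have e1 : 0 <= (1 : R) <= 1 by apply/andP; split; lra.
have : c 0%N * 1 + c 1%N * (1 ^+ 2 / 2) + c n / n.+1%:R <= A * 1 + B * (1 ^+ 2 / 2).
  apply: (cvgr_to_ge (primitive_cvg e1)); near=> N.
  have nN : (n < N)%N by near: N; exists n.+1.
  rewrite primitive_psum_split ?(leq_trans n2 (ltnW nN)) // lerD2l.
  rewrite /primitive_psum (bigD1_seq n) /= ?mem_index_iota ?n2 ?iota_uniq //.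
  rewrite expr1n mul1r lerDl; apply: sumr_ge0 => m _; rewrite expr1n mul1r.
  by apply: divr_ge0; [exact: c_ge0|exact: ler0n].
rewrite c0 c1 -[X in _ <= X]addr0 lerD2l pmulr_lle0 ?invr_gt0 ?ltr0n // => cn0.
by apply/eqP; rewrite eq_le cn0 c_ge0.
Unshelve. all: by end_near.
Qed.

End coefficients_of_primitive.

Section square_integrable.
Context d (T : measurableType d) (R : realType).
Variables (mu : {measure set T -> \bar R}) (D : set T).
Hypothesis mD : measurable D.

Definition sqr_integrable (u : T -> R) :=
  measurable_fun D u /\ mu.-integrable D (fun x => (u x ^+ 2)%:E).

Definition l2dot (u v : T -> R) : R := \int[mu]_(x in D) (u x * v x).

Lemma sqr_integrable_bounded (u : T -> R) (M : R) : (mu D < +oo)%E ->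
  measurable_fun D u -> (forall x, D x -> `|u x| <= M) -> sqr_integrable u.
Proof.
move=> Doo u_meas uM; split => //.
apply: (measurable_bounded_integrable (f := fun x => u x ^+ 2)) => //.
  exact: measurable_funX.
exists (M ^+ 2); split; first exact: num_real.
move=> r Mr x Dx /=; rewrite normrX; apply/ltW/(le_lt_trans _ Mr).
by rewrite lerXn2r ?nnegrE ?uM ?(le_trans _ (uM x Dx)).
Qed.

Lemma sqr_integrable_mul u v : sqr_integrable u -> sqr_integrable v ->
  mu.-integrable D (EFin \o (fun x => u x * v x)).
Proof.
move=> [u_meas iu] [v_meas iv].
apply: (le_integrable mD (g := (fun x => (u x ^+ 2)%:E + (v x ^+ 2)%:E)%E)).
- by apply/measurable_EFinP; exact: measurable_funM.
- move=> x _ /=; rewrite lee_fin (ger0_norm (x := _ + _)) ?addr_ge0 ?sqr_ge0 //.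
  rewrite normrM -[u x ^+ 2]real_normK ?num_real // -[v x ^+ 2]real_normK ?num_real //.
  by have := normr_ge0 (u x); have := normr_ge0 (v x); nra.
- exact: integrableD.
Qed.

Lemma sqr_integrableD u v : sqr_integrable u -> sqr_integrable v ->
  sqr_integrable (fun x => u x + v x).
Proof.
move=> [u_meas iu] [v_meas iv]; split; first exact: measurable_funD.
apply: (le_integrable mD (g := (fun x => 2%:E * (u x ^+ 2)%:E + 2%:E * (v x ^+ 2)%:E)%E)).
- by apply/measurable_EFinP; apply: measurable_funX; exact: measurable_funD.
- move=> x _ /=; rewrite lee_fin ger0_norm ?sqr_ge0 // ger0_norm; last first.
    by rewrite addr_ge0 // mulr_ge0 // sqr_ge0.
  by have := sqr_ge0 (u x - v x); nra.
- exact: (integrableD mD (integrableZl mD 2 iu) (integrableZl mD 2 iv)).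
Qed.

Lemma sqr_integrableZ k u : sqr_integrable u -> sqr_integrable (fun x => k * u x).
Proof.
move=> [u_meas iu]; split; first exact: measurable_funM.
apply: (eq_integrable mD (fun x => (k ^+ 2)%:E * (u x ^+ 2)%:E)%E).
  by move=> x _ /=; rewrite -EFinM exprMn.
exact: integrableZl.
Qed.

Lemma sqr_integrableB u v : sqr_integrable u -> sqr_integrable v ->
  sqr_integrable (fun x => u x - v x).
Proof.
move=> hu hv; have := sqr_integrableD hu (sqr_integrableZ (-1) hv).
by congr sqr_integrable; apply/funext => x; rewrite mulN1r.
Qed.

Lemma eq_l2dot u u' v : {in D, u =1 u'} -> l2dot u v = l2dot u' v.
Proof. by move=> uu'; apply: eq_Rintegral => x Dx; rewrite uu'. Qed.

Lemma l2dotC u v : l2dot u v = l2dot v u.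
Proof. by apply: eq_Rintegral => x _; rewrite mulrC. Qed.

Lemma l2dot_ge0 u : 0 <= l2dot u u.
Proof. by apply: Rintegral_ge0 => x _; rewrite -expr2 sqr_ge0. Qed.

Lemma l2dotDl u v w : sqr_integrable u -> sqr_integrable v -> sqr_integrable w ->
  l2dot (fun x => u x + v x) w = l2dot u w + l2dot v w.
Proof.
move=> hu hv hw; rewrite /l2dot -RintegralD ?sqr_integrable_mul //.
by apply: eq_Rintegral => x _; rewrite mulrDl.
Qed.

Lemma l2dotZl k u w : sqr_integrable u -> sqr_integrable w ->
  l2dot (fun x => k * u x) w = k * l2dot u w.
Proof.
move=> hu hw; rewrite /l2dot -RintegralZl ?sqr_integrable_mul //.
by apply: eq_Rintegral => x _; rewrite mulrA.
Qed.

Lemma l2dotBl u v w : sqr_integrable u -> sqr_integrable v -> sqr_integrable w ->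
  l2dot (fun x => u x - v x) w = l2dot u w - l2dot v w.
Proof.
move=> hu hv hw; rewrite -[- l2dot v w]mulN1r -l2dotZl // -l2dotDl //.
  by apply: eq_l2dot => x _; rewrite mulN1r.
exact: sqr_integrableZ.
Qed.

Lemma l2dotDr u v w : sqr_integrable u -> sqr_integrable v -> sqr_integrable w ->
  l2dot w (fun x => u x + v x) = l2dot w u + l2dot w v.
Proof. by move=> hu hv hw; rewrite l2dotC l2dotDl // ![l2dot w _]l2dotC. Qed.

Lemma l2dotZr k u w : sqr_integrable u -> sqr_integrable w ->
  l2dot w (fun x => k * u x) = k * l2dot w u.
Proof. by move=> hu hw; rewrite l2dotC l2dotZl // l2dotC. Qed.

Lemma l2dotBr u v w : sqr_integrable u -> sqr_integrable v -> sqr_integrable w ->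
  l2dot w (fun x => u x - v x) = l2dot w u - l2dot w v.
Proof. by move=> hu hv hw; rewrite l2dotC l2dotBl // ![l2dot _ w]l2dotC. Qed.

Lemma l2dot_sqrDZ u v k : sqr_integrable u -> sqr_integrable v ->
  l2dot (fun x => u x + k * v x) (fun x => u x + k * v x) =
  l2dot u u + 2 * k * l2dot u v + k ^+ 2 * l2dot v v.
Proof.
move=> hu hv; have expand w : sqr_integrable w ->
    l2dot (fun x => u x + w x) (fun x => u x + w x) =
    l2dot u u + 2 * l2dot u w + l2dot w w.
  move=> hw; have huw := sqr_integrableD hu hw.
  by rewrite l2dotDl // !l2dotDr // (l2dotC w u); ring.
have hkv := sqr_integrableZ k hv.
apply: eq_trans (expand _ hkv) _.
by rewrite l2dotZl // !l2dotZr //; ring.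
Qed.

Lemma l2dot_le_weighted h p l : sqr_integrable h -> sqr_integrable p -> 0 < l ->
  l * `|l2dot h p| <= l2dot h h + l ^+ 2 * l2dot p p.
Proof.
move=> hh hp l0.
have := l2dot_ge0 (fun x => h x + l * p x); rewrite l2dot_sqrDZ //.
have := l2dot_ge0 (fun x => h x + - l * p x); rewrite l2dot_sqrDZ // sqrrN.
have := l2dot_ge0 p; have := l2dot_ge0 h.
by case: (lerP 0 (l2dot h p)) => s; [rewrite ger0_norm | rewrite ltr0_norm]; nra.
Qed.

Lemma l2dot_norm_le0_eq0 h p : sqr_integrable h -> sqr_integrable p ->
  l2dot h h <= 0 -> l2dot h p = 0.
Proof.
move=> hh hp hh0; apply/normr0_eq0/eqP; rewrite eq_le normr_ge0 andbT.
apply: (@ler0_small_scale _ _ (l2dot p p) 1) => // e e0 _.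
rewrite -(ler_pM2l e0) mulrA -expr2.
have := l2dot_le_weighted hh hp e0; lra.
Qed.

Lemma l2dot_cvg g p (s : nat -> T -> R) :
  sqr_integrable g -> sqr_integrable p -> (forall N, sqr_integrable (s N)) ->
  (fun N => l2dot (fun x => g x - s N x) (fun x => g x - s N x)) @ \oo --> 0 ->
  (fun N => l2dot (s N) p) @ \oo --> l2dot g p.
Proof.
move=> hg hp hs /cvgr0Pnorm_le dist_cvg; apply/cvgrPdist_le => eps eps0.
have K0 := l2dot_ge0 p; set K := l2dot p p in K0.
(* weight [l] chosen so that the weighted Cauchy-Schwarz bound gives [eps] *)
pose l := eps / (2 * (K + 1)).
have l0 : 0 < l by rewrite divr_gt0 // mulr_gt0 //; lra.
have lK : l * K = eps / 2 - l.
  by rewrite /l; field; apply/lt0r_neq0; lra.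
have := dist_cvg (l * eps / 2) (divr_gt0 (mulr_gt0 l0 eps0) (ltr0Sn _ 1)).
apply: filterS => N hN; rewrite -l2dotBl //.
have hb := l2dot_le_weighted (sqr_integrableB hg (hs N)) hp l0.
move: hN hb; set y := l2dot _ _; set x := l2dot _ p => hN hb.
have hy : y <= l * eps / 2 := le_trans (ler_norm y) hN.
rewrite -(ler_pM2l l0); apply: (le_trans hb).
have -> : l ^+ 2 * K = l * (eps / 2 - l) by rewrite -lK expr2 mulrA.
have : 0 <= l * l by nra.
lra.
Qed.

End square_integrable.

Section lebesgue_I11.
Context {R : realType}.
Local Notation mu := (@lebesgue_measure R).
Local Notation D := (@I11 R).
Local Notation L2 := (sqr_integrable mu D).
Local Notation dot := (l2dot mu D).

Definition monomial (k : nat) (t : R) := t ^+ k.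

Lemma measurable_I11 : measurable (D : set (measurableTypeR R)).
Proof. exact: measurable_itv. Qed.

Lemma lebesgue_I11_lt_oo : (mu D < +oo)%E.
Proof. by rewrite /I11 lebesgue_measure_itv /= ifT ?ltry // lte_fin; lra. Qed.

Lemma sqr_integrable_mon k : L2 (monomial k).
Proof.
apply: (sqr_integrable_bounded (mu := mu) (M := 1) measurable_I11 lebesgue_I11_lt_oo).
- by apply: measurable_funX; exact: measurable_id.
move=> t; rewrite /I11 /= in_itv /= => /andP[t1 t2].
by rewrite /monomial normrX exprn_ile1 // ler_norml t1 t2.
Qed.

Lemma sqr_integrable_psi x : L2 (psi x).
Proof.
have -> : psi x = \1_(`[x, +oo[) :> (R -> R).
  apply/funext => t; rewrite /psi indicE; case: ifPn => xt.
    by rewrite mem_set //= in_itv /= xt.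
  by rewrite memNset //= in_itv /= andbT (negbTE xt).
apply: (sqr_integrable_bounded (mu := mu) (M := 1) measurable_I11 lebesgue_I11_lt_oo).
- by apply: measurable_indic; exact: measurable_itv.
by move=> t _; rewrite indicE; case: (_ \in _); rewrite ?normr1 ?normr0.
Qed.

Lemma psum_recr (c : nat -> R) N :
  psum c N.+1 = (fun t => psum c N t + c N * monomial N t).
Proof. by apply/funext => t; rewrite /psum big_nat_recr. Qed.

Lemma psum0 (c : nat -> R) : psum c 0 = fun=> 0.
Proof. by apply/funext => t; rewrite /psum big_geq. Qed.

Lemma sqr_integrable_psum (c : nat -> R) N : L2 (psum c N).
Proof.
elim: N => [|N ih].
  rewrite psum0.
  apply: (sqr_integrable_bounded (mu := mu) (M := 0) measurable_I11 lebesgue_I11_lt_oo).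
  - exact: measurable_cst.
  by move=> t _; rewrite normr0.
have hcm := sqr_integrableZ measurable_I11 (c N) (sqr_integrable_mon N).
by rewrite psum_recr; exact: (sqr_integrableD measurable_I11 ih hcm).
Qed.

Lemma L2dist2E u v : L2 u -> L2 v ->
  L2dist2 u v = (dot (fun x => u x - v x) (fun x => u x - v x))%:E.
Proof.
move=> hu hv; rewrite /L2dist2 /l2dot /Rintegral fineK.
  by apply: eq_integral => x _; rewrite expr2.
apply: integrable_fin_num; first exact: measurable_I11.
have huv := sqr_integrableB measurable_I11 hu hv.
exact: (sqr_integrable_mul measurable_I11 huv huv).
Qed.

Lemma l2dot_psum (c : nat -> R) N p : L2 p ->
  dot (psum c N) p = \sum_(0 <= n < N) c n * dot (monomial n) p.
Proof.
move=> hp; elim: N => [|N ih].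
  rewrite big_geq // psum0 /l2dot; under eq_Rintegral do rewrite mul0r.
  by rewrite Rintegral_cst ?mul0r //; exact: measurable_I11.
have hm := sqr_integrable_mon N; have hs := sqr_integrable_psum c N.
have hcm := sqr_integrableZ measurable_I11 (c N) hm.
by rewrite big_nat_recr //= -ih psum_recr !(l2dotDl, l2dotZl) //; exact: measurable_I11.
Qed.

Lemma Rintegral_itv1_pow x k : x <= 1 ->
  \int[mu]_(t in `[x, 1]) t ^+ k = (1 - x ^+ k.+1) / k.+1%:R.
Proof.
rewrite le_eqVlt => /predU1P[->|x1].
  by rewrite set_itv1 Rintegral_set1 expr1n subrr mul0r.
rewrite /Rintegral (@continuous_FTC2 _ _ (fun t => t ^+ k.+1 / k.+1%:R)) //=.
- by rewrite expr1n -mulrBl.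
- by apply: continuous_subspaceT => t; exact: exprn_continuous.
- split.
  + by move=> t _; apply: derivableM; [exact: exprn_derivable|exact: derivable_cst].
  + by apply: cvg_at_right_filter; apply: cvgM; [exact: exprn_continuous|exact: cvg_cst].
  + by apply: cvg_at_left_filter; apply: cvgM; [exact: exprn_continuous|exact: cvg_cst].
- move=> t _; rewrite derive1Mr; last exact: exprn_derivable.
  by rewrite exp_derive1 /= mulrC /GRing.scale /= mulrA mulVf ?mul1r.
Qed.

Lemma l2dot_psi_mon x k : -1 <= x <= 1 ->
  dot (psi x) (monomial k) = (1 - x ^+ k.+1) / k.+1%:R.
Proof.
move=> /andP[x1 x2]; rewrite -Rintegral_itv1_pow //.
have -> : `[x, 1]%classic = D `&` `[x, +oo[%classic :> set R.
  apply/seteqP; split => t /=; rewrite /I11 /= !in_itv /= ?andbT.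
    by move=> /andP[h1 h2]; split => //; apply/andP; split => //; lra.
  by move=> [/andP[h1 h2] h3]; apply/andP; split.
rewrite Rintegral_mkcondr; apply: eq_Rintegral => t _.
rewrite patchE /psi /monomial; case: ifPn => xt.
  by rewrite mem_set ?mul1r //= in_itv /= xt.
rewrite mul0r ifF //; apply/negbTE; apply: contra xt.
by rewrite inE /= in_itv /= andbT.
Qed.

Lemma l2dot_mon i k :
  dot (monomial i) (monomial k) = (~~ odd (i + k))%:R * 2 / (i + k).+1%:R.
Proof.
have -> : dot (monomial i) (monomial k) = dot (psi (-1)) (monomial (i + k)).
  apply: eq_Rintegral => t; rewrite inE /I11 /= in_itv /= => /andP[t1 _].
  by rewrite /psi t1 /monomial mul1r exprD.
rewrite l2dot_psi_mon; last by rewrite lexx /=; lra.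
congr (_ / _); rewrite -signr_odd oddS.
by case: odd; rewrite /= ?expr0 ?expr1; lra.
Qed.

Lemma in_Aplus0 : in_Aplus (fun=> 0) (fun=> 0 : R).
Proof.
split=> //; split; first exact: measurable_cst.
apply: cvg_near_cst; apply: nearW => N.
have -> : psum (fun=> 0) N = (fun=> 0 : R).
  by apply/funext => t; rewrite /psum big1 // => i _; rewrite mul0r.
rewrite /L2dist2; under eq_integral do rewrite subrr expr0n /=.
by rewrite integral0.
Qed.

Lemma psum_add_mon (c : nat -> R) n eps N t : (n < N)%N ->
  psum (fun m => c m + (if m == n then eps else 0)) N t = psum c N t + eps * monomial n t.
Proof.
move=> nN; rewrite /psum; under eq_bigr do rewrite mulrDl.
rewrite big_split /=; congr (_ + _).
rewrite (bigD1_seq n) ?mem_index_iota ?iota_uniq //= eqxx big1 ?addr0 // => m /negbTE ->.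
by rewrite mul0r.
Qed.

Lemma l2dot_mon_psi_diff e n : 0 <= e <= 1 ->
  dot (monomial n) (fun t => psi 0 t - psi e t) = e ^+ n.+1 / n.+1%:R.
Proof.
move=> /andP[e0 e1]; have mI := measurable_I11.
have h0 := sqr_integrable_psi (0 : R); have he := sqr_integrable_psi e.
have hm := sqr_integrable_mon n.
rewrite l2dotBr // !(l2dotC mu D (monomial n)) !l2dot_psi_mon; try by apply/andP; split; lra.
by rewrite -mulrBl exprS mul0r; congr (_ * _); ring.
Qed.

Definition candidate (a t : R) :=
  (1 - a) / 2 * monomial 0%N t + 3 / 4 * (1 - a ^+ 2) * monomial 1%N t.

Section candidate.
Variable a : R.
Local Notation q := (fun t => psi a t - candidate a t).

Lemma sqr_integrable_candidate : L2 (candidate a).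
Proof.
by apply: (sqr_integrableD measurable_I11); apply: (sqr_integrableZ measurable_I11);
  exact: sqr_integrable_mon.
Qed.

Lemma l2dot_candidate phi : L2 phi -> dot (candidate a) phi =
  (1 - a) / 2 * dot (monomial 0%N) phi + 3 / 4 * (1 - a ^+ 2) * dot (monomial 1%N) phi.
Proof.
have mI := measurable_I11; have h0 := sqr_integrable_mon 0%N.
have h1 := sqr_integrable_mon 1%N.
by move=> hphi; rewrite l2dotDl ?l2dotZl //; exact: sqr_integrableZ.
Qed.

Lemma candidate_residual_monE n : -1 <= a <= 1 -> dot q (monomial n) =
  (1 - a ^+ n.+1) / n.+1%:R - ((1 - a) / 2 * dot (monomial 0%N) (monomial n) +
                                3 / 4 * (1 - a ^+ 2) * dot (monomial 1%N) (monomial n)).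
Proof.
move=> a11; have mI := measurable_I11.
have hm := sqr_integrable_mon n; have hpsi := sqr_integrable_psi a.
have hp := sqr_integrable_candidate.
by rewrite l2dotBl // l2dot_psi_mon // l2dot_candidate.
Qed.

Lemma candidate_residual_mon_le0 n : -1 <= a <= 0 -> 5 * a ^+ 2 <= 1 ->
  dot q (monomial n) <= 0.
Proof.
move=> /andP[a1 a0] a5; rewrite candidate_residual_monE; last by rewrite a1; lra.
rewrite !l2dot_mon subr_le0 -[n]odd_double_half.
case: odd; rewrite /= ?add0n ?add1n /= ?odd_double /=.
- by rewrite !mul0r mulr0 add0r mul1r; exact: odd_moment_gap.
- by rewrite !mul0r mulr0 addr0 mul1r; apply: even_moment_gap; rewrite a1.
Qed.

Lemma candidate_residual_orth : -1 <= a <= 1 -> dot q (candidate a) = 0.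
Proof.
move=> a11; have hq : L2 q.
  exact: (sqr_integrableB measurable_I11 (sqr_integrable_psi a) sqr_integrable_candidate).
rewrite l2dotC l2dot_candidate // !(l2dotC mu D _ q) !candidate_residual_monE //.
rewrite !l2dot_mon !add0n !add1n /= expr1; lra.
Qed.

End candidate.

Section projection.
Variables (a : R) (c : nat -> R) (g : R -> R).
Hypotheses (a_range : -1 <= a <= 1) (g_proj : in_Aplus c g)
  (g_min : forall c' g', in_Aplus c' g' -> (L2dist2 (psi a) g <= L2dist2 (psi a) g')%E).
Local Notation r := (fun x => psi a x - g x).

Let mI := measurable_I11.
Let c_ge0 : forall n, 0 <= c n := g_proj.1.

Lemma sqr_integrable_residual : L2 r.
Proof.
have hpsi := sqr_integrable_psi a.
have h0 : L2 (fun=> 0) by rewrite -(psum0 (fun=> 0)); exact: sqr_integrable_psum.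
have := g_min in_Aplus0; rewrite (L2dist2E hpsi h0).
move=> dist_oo; have r_meas : measurable_fun D r.
  by apply: measurable_funB; [exact: hpsi.1|exact: g_proj.2.1].
split=> //; apply/integrableP; split.
  by apply/measurable_EFinP; exact: measurable_funX.
under eq_integral do rewrite gee0_abs ?lee_fin ?sqr_ge0 //.
by apply: le_lt_trans dist_oo _; rewrite ltry.
Qed.

Lemma sqr_integrable_proj : L2 g.
Proof.
have := sqr_integrableB mI (sqr_integrable_psi a) sqr_integrable_residual.
by congr sqr_integrable; apply/funext => x; ring.
Qed.

Lemma l2dot_psum_to_proj p : L2 p ->
  (fun N => dot (psum c N) p) @ \oo --> dot g p.
Proof.
move=> hp; apply: (l2dot_cvg mI sqr_integrable_proj hp (sqr_integrable_psum c)).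
have := g_proj.2.2.
rewrite (funext (fun N => L2dist2E sqr_integrable_proj (sqr_integrable_psum c N))).
exact: fine_cvg.
Qed.

Lemma proj_perturb n eps : 0 <= c n + eps ->
  2 * eps * dot r (monomial n) <= eps ^+ 2 * dot (monomial n) (monomial n).
Proof.
move=> c_eps; have hm := sqr_integrable_mon n.
pose g' x := g x + eps * monomial n x.
have hg' : L2 g' := sqr_integrableD mI sqr_integrable_proj (sqr_integrableZ mI eps hm).
have hA : in_Aplus (fun m => c m + (if m == n then eps else 0)) g'.
  split; first by move=> m; case: eqP => [->|_] //; rewrite addr0.
  split; first exact: hg'.1.
  apply: (cvg_trans _ g_proj.2.2); apply: near_eq_cvg; near=> N.
  have nN : (n < N)%N by near: N; exists n.+1.
  rewrite /L2dist2; apply: eq_integral => x _.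
  by rewrite psum_add_mon // /g'; congr ((_ ^+ 2)%:E); ring.
have := g_min hA.
rewrite (L2dist2E (sqr_integrable_psi a) sqr_integrable_proj).
rewrite (L2dist2E (sqr_integrable_psi a) hg') lee_fin.
have -> : (fun x => psi a x - g' x) = fun x => r x + - eps * monomial n x.
  by apply/funext => x; rewrite /g'; ring.
rewrite l2dot_sqrDZ ?sqrrN //; [lra | exact: sqr_integrable_residual].
Unshelve. all: by end_near.
Qed.

Lemma residual_mon_le0 n : dot r (monomial n) <= 0.
Proof.
apply: (@ler0_small_scale _ _ (dot (monomial n) (monomial n) / 2) 1) => // e e0 _.
have pert := proj_perturb (addr_ge0 (c_ge0 n) (ltW e0)).
have : e * (2 * dot r (monomial n)) <= e * (e * dot (monomial n) (monomial n)) by nra.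
by rewrite ler_pM2l //; lra.
Qed.

Lemma residual_mon_eq0 n : 0 < c n -> dot r (monomial n) = 0.
Proof.
move=> cn; apply/eqP; rewrite eq_le residual_mon_le0 /= -oppr_le0.
apply: (@ler0_small_scale _ _ (dot (monomial n) (monomial n) / 2) (c n)) => // e e0 ecn.
have := @proj_perturb n (- e); rewrite subr_ge0 ecn sqrrN => /(_ isT) pert.
have : e * (- (2 * dot r (monomial n))) <= e * (e * dot (monomial n) (monomial n)) by nra.
by rewrite ler_pM2l //; lra.
Qed.

Lemma l2dot_proj_residual : dot g r = 0.
Proof.
have hr := sqr_integrable_residual.
have lim0 : (fun N => dot (psum c N) r) @ \oo --> (0 : R).
  apply: cvg_near_cst; apply: nearW => N; rewrite l2dot_psum // big1 // => n _.
  have := c_ge0 n; rewrite le_eqVlt => /predU1P[<-|cn]; first by rewrite mul0r.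
  by rewrite l2dotC residual_mon_eq0 // mulr0.
exact: (cvg_unique _ (l2dot_psum_to_proj hr) lim0).
Qed.

Lemma l2dot_proj_mon n :
  dot g (monomial n) = (1 - a ^+ n.+1) / n.+1%:R - dot r (monomial n).
Proof.
have hr := sqr_integrable_residual; have hm := sqr_integrable_mon n.
rewrite -l2dot_psi_mon // -l2dotBl //; last exact: sqr_integrable_psi.
by apply: eq_l2dot => x _; ring.
Qed.

Lemma support01_bounds : (forall n, 0 < c n <-> n = 0%N \/ n = 1%N) ->
  a <= 0 /\ 5 * a ^+ 2 <= 1.
Proof.
move=> supp.
have c0 : 0 < c 0%N by apply/supp; left.
have c1 : 0 < c 1%N by apply/supp; right.
have cn n : (2 <= n)%N -> c n = 0.
  move=> n2; apply/eqP; rewrite eq_le c_ge0 andbT leNgt; apply/negP => /supp.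
  by case=> n01; rewrite n01 in n2.
have moment k : (1 - a ^+ k.+1) / k.+1%:R - dot r (monomial k) =
    c 0%N * dot (monomial 0%N) (monomial k) + c 1%N * dot (monomial 1%N) (monomial k).
  have hm := sqr_integrable_mon k.
  have lim : (fun N => dot (psum c N) (monomial k)) @ \oo -->
      c 0%N * dot (monomial 0%N) (monomial k) + c 1%N * dot (monomial 1%N) (monomial k).
    apply: cvg_near_cst; near=> N.
    have N2 : (2 <= N)%N by near: N; exists 2%N.
    rewrite l2dot_psum // big_ltn ?(leq_trans _ N2) // big_ltn //.
    rewrite big_nat_cond big1 ?addr0 ?addrA // => n /andP[/andP[n2 _] _].
    by rewrite cn ?mul0r.
  by rewrite -l2dot_proj_mon; exact: (cvg_unique _ (l2dot_psum_to_proj hm) lim).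
have := moment 0%N; have := moment 1%N; have := moment 2%N; have := moment 3%N.
rewrite !l2dot_mon !add0n !add1n /= expr1 (residual_mon_eq0 c0) (residual_mon_eq0 c1).
have := residual_mon_le0 2%N; have := residual_mon_le0 3%N.
move=> r3 r2 m3 m2 m1 m0; apply: moment_bounds; lra.
Unshelve. all: by end_near.
Qed.

Section optimal_candidate.
Hypotheses (a_le0 : a <= 0) (a_sqr : 5 * a ^+ 2 <= 1).
Local Notation p := (candidate a).
Local Notation q := (fun t => psi a t - candidate a t).

Lemma proj_candidate_dist_le0 : dot (fun x => g x - p x) (fun x => g x - p x) <= 0.
Proof.
have hq : L2 q := sqr_integrableB mI (sqr_integrable_psi a) (sqr_integrable_candidate a).
have hr := sqr_integrable_residual; have hg := sqr_integrable_proj.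
have hp := sqr_integrable_candidate a.
have a11 : -1 <= a <= 0 by case/andP: a_range => -> _.
have gq : dot g q <= 0.
  apply: (cvgr_to_le (l2dot_psum_to_proj hq)); apply: nearW => N.
  rewrite l2dot_psum //; apply: sumr_le0 => n _; apply: mulr_ge0_le0 => //.
  by rewrite l2dotC; exact: candidate_residual_mon_le0.
have rp : dot r p <= 0.
  have al : 0 <= (1 - a) / 2 by lra.
  have be : 0 <= 3 / 4 * (1 - a ^+ 2) by apply: mulr_ge0 => //; move: a_sqr; lra.
  rewrite l2dotC l2dot_candidate // !(l2dotC mu D _ r).
  have := mulr_ge0_le0 al (residual_mon_le0 0%N).
  have := mulr_ge0_le0 be (residual_mon_le0 1%N); lra.
have -> : dot (fun x => g x - p x) (fun x => g x - p x) =
          dot (fun x => q x - r x) (fun x => g x - p x).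
  by congr l2dot; apply/funext => x; ring.
rewrite l2dotBl ?l2dotBr //; try exact: sqr_integrableB.
rewrite candidate_residual_orth // (l2dotC mu D q g) (l2dotC mu D r g) l2dot_proj_residual.
lra.
Qed.

Lemma l2dot_proj_candidate phi : L2 phi -> dot g phi = dot p phi.
Proof.
move=> hphi; apply/eqP; rewrite -subr_eq0 -l2dotBl //; last 2 first.
- exact: sqr_integrable_proj.
- exact: sqr_integrable_candidate.
apply/eqP/(l2dot_norm_le0_eq0 mI) => //; last exact: proj_candidate_dist_le0.
exact: (sqr_integrableB mI sqr_integrable_proj (sqr_integrable_candidate a)).
Qed.

Lemma primitive_psum_proj_cvg e : 0 <= e <= 1 ->
  primitive_psum c e 0 N @[N --> \oo] -->
  (1 - a) / 2 * e + 3 / 4 * (1 - a ^+ 2) * (e ^+ 2 / 2).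
Proof.
move=> e01; have hphi := sqr_integrableB mI (sqr_integrable_psi 0) (sqr_integrable_psi e).
have := l2dot_psum_to_proj hphi.
rewrite l2dot_proj_candidate // l2dot_candidate // !l2dot_mon_psi_diff // expr1 divr1.
apply: cvg_trans; apply: near_eq_cvg; apply: nearW => N.
by rewrite l2dot_psum //; apply: eq_bigr => n _; rewrite l2dot_mon_psi_diff.
Qed.

End optimal_candidate.
End projection.
End lebesgue_I11.

Unset Implicit Arguments.
Set Strict Implicit.

Theorem proposition1p10 (R : realType) (a : R) (ha : -1 <= a < 1)
  (c : nat -> R) (hc : is_proj_Aplus (psi a) c) :
  ((forall n : nat, 0 < c n <-> (n = 0%N \/ n = 1%N)) <->
     (- (Num.sqrt 5)^-1 <= a <= 0)) /\
  (- (Num.sqrt 5)^-1 <= a <= 0 ->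
     c 0%N = (1 - a) / 2 /\ c 1%N = 3 / 4 * (1 - a ^+ 2) /\
     forall n : nat, (2 <= n)%N -> c n = 0).
Proof.
case: hc => g [g_proj g_min].
have a_range : -1 <= a <= 1 by case/andP: ha => -> /ltW.
have coefs : a <= 0 -> 5 * a ^+ 2 <= 1 -> c 0%N = (1 - a) / 2 /\
    c 1%N = 3 / 4 * (1 - a ^+ 2) /\ forall n, (2 <= n)%N -> c n = 0.
  move=> a_le0 a_sqr.
  have prim := primitive_psum_proj_cvg a_range g_proj g_min a_le0 a_sqr.
  have [c0 c1] := primitive_coef01 g_proj.1 prim.
  by split; [|split; [|exact: primitive_coef_ge2 g_proj.1 prim]].
rewrite sqrt5_range; split; last by case/andP; exact: coefs.
split=> [supp | /andP[a_le0 a_sqr] n].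
  by have [-> ->] := support01_bounds a_range g_proj g_min supp.
have [c0 [c1 cn]] := coefs a_le0 a_sqr.
split=> [|[] ->]; last 2 first.
- by rewrite c0; lra.
- by rewrite c1; lra.
by case: n => [|[|n]]; [left | right | rewrite cn // ltxx].
Qed.
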